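(* Let $\beta>0$ and $\mathcal P$ a parameter set. For all $j\in\{0,\dots,r\}$ and all $n\in\mathbb Z$ there exists a constant $0<l^+_{j,n}<\infty$ such that for all $f\in\mathcal H(\beta,\mathcal P)$, $$\sup_{y\in[n\gamma,(n+1)\gamma]}\big|(\ln f)^{(j)}(y)\big|\le l^+_{j,n}.$$
   Context: $\psi(x)=\pi^{-1/2}e^{-x^2}$. For $\beta>0$, $r$ is the largest integer strictly less than $\beta$. A parameter set $\mathcal{P}=\{\gamma,l^+,L,\varepsilon,C,\alpha,\xi,M\}$ consists of a polynomial $L$ and positive constants; $\mathcal H(\beta,\mathcal P)$ is the set of probability densities $f$ on $\mathbb R$ with: $\ln f$ $r$ times differentiable, $|(\ln f)^{(r)}(x)-(\ln f)^{(r)}(y)|\le r!L(x)|y-x|^{\beta-r}$ whenever $|x-y|\le\gamma$, $|(\ln f)^{(j)}(0)|\le l^+$ for $j=0..r$; $\int|(\ln f)^{(j)}|^{(2\beta+\varepsilon)/j}f\le C$ ($j=1..r$), $\int|L|^{2+\varepsilon/\beta}f\le C$; $f\le M\psi$; $f>0$ nondecreasing on $(-\infty,-\alpha)$, nonincreasing on $(\alpha,\infty)$, $f\ge\xi$ on $[-\alpha,\alpha]$. *)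

From mathcomp Require Import all_boot all_order all_algebra.
From mathcomp Require Import all_classical all_reals all_analysis.
Set Implicit Arguments. Unset Strict Implicit. Unset Printing Implicit Defensive.
Import Order.TTheory GRing.Theory Num.Theory.
Import numFieldNormedType.Exports.
Local Open Scope classical_set_scope.
Local Open Scope ring_scope.

Definition psi {R : realType} (x : R) : R := (Num.sqrt pi)^-1 * expR (- x ^+ 2).

Definition logf {R : realType} (f : R -> R) : R -> R := fun x => ln (f x).

Definition is_density {R : realType} (f : R -> R) : Prop :=
  measurable_fun setT f /\ (forall x, 0 <= f x) /\
  (\int[@lebesgue_measure R]_(x in setT) (f x)%:E = 1)%E.

(* The class H(beta, P) with P = {gamma, lp, L, eps, C, alpha, xi, M};
   r is the largest integer strictly below beta (passed explicitly). *)
Definition inH {R : realType} (beta : R) (r : nat)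
  (gamma lp : R) (L : {poly R}) (eps C alpha xi M : R) (f : R -> R) : Prop :=
  let g := logf f in
  is_density f /\
  (forall k, (k < r)%N -> forall x, derivable (derive1n k g) x 1) /\
  (forall x y, `|x - y| <= gamma ->
     `|derive1n r g x - derive1n r g y|
       <= (r`!)%:R * L.[x] * (`|y - x| `^ (beta - r%:R))) /\
  (forall j, (j <= r)%N -> `|derive1n j g 0| <= lp) /\
  (forall j, (1 <= j <= r)%N ->
     (\int[@lebesgue_measure R]_(x in setT)
        ((`|derive1n j g x| `^ ((2 * beta + eps) / j%:R)) * f x)%:E
      <= C%:E)%E) /\
  (\int[@lebesgue_measure R]_(x in setT)
      ((`|L.[x]| `^ (2 + eps / beta)) * f x)%:E <= C%:E)%E /\
  (forall x, f x <= M * psi x) /\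
  (forall x, x < - alpha -> 0 < f x) /\
  (forall x y, x <= y -> y < - alpha -> f x <= f y) /\
  (forall x, alpha < x -> 0 < f x) /\
  (forall x y, alpha < x -> x <= y -> f y <= f x) /\
  (forall x, - alpha <= x <= alpha -> xi <= f x).

From mathcomp Require Import all_boot all_order all_algebra.
From mathcomp Require Import all_classical all_reals all_analysis.
From mathcomp Require Import lra zify.
Set Implicit Arguments. Unset Strict Implicit. Unset Printing Implicit Defensive.
Import Order.TTheory GRing.Theory Num.Theory.
Import numFieldNormedType.Exports.
Local Open Scope classical_set_scope.
Local Open Scope ring_scope.

(* The r-th derivative of ln f is bounded near 0 by the condition at 0 and,
   farther out, by walking from 0 in steps of length at most gamma: each step
   changes it by at most r! * sup|L| * gamma^(beta - r) by the local Hoelder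
   condition.  Lower derivatives are then bounded one order at a time by the
   mean value theorem, starting again from their bounded values at 0.  All
   bounds depend only on the parameters, and [n gamma, (n+1) gamma] lies in
   the ball of radius (|n| + 1) gamma. *)

Section BoundsOnBalls.
Context {R : realType}.

Lemma horner_bounded_on_ball (p : {poly R}) (K : R) : 0 <= K ->
  exists B, 0 <= B /\ forall x, `|x| <= K -> `|p.[x]| <= B.
Proof.
move=> K0; elim/poly_ind: p => [|p c [B [B0 HB]]].
  by exists 0; split => // x _; rewrite horner0 normr0.
exists (B * K + `|c|); split; first by rewrite addr_ge0 // mulr_ge0.
move=> x hx; rewrite hornerMXaddC (le_trans (ler_normD _ _)) // lerD2r normrM.
by rewrite ler_pM // HB.
Qed.

(* Walk from 0 to y through the points k y / N, N = floor(K / gamma) + 1. *)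
Lemma bounded_on_ball_of_increments (h : R -> R) (gamma K D : R) :
  0 < gamma ->
  (forall x y, `|x| <= K -> `|x - y| <= gamma -> `|h x - h y| <= D) ->
  forall y, `|y| <= K ->
  `|h y| <= `|h 0| + (Num.truncn (K / gamma)).+1%:R * D.
Proof.
move=> g0 hD y hy; set N := (Num.truncn (K / gamma)).+1.
have K0 : 0 <= K := le_trans (normr_ge0 y) hy.
have N0 : 0 < N%:R :> R by rewrite ltr0n.
have KN : K <= N%:R * gamma by rewrite -ler_pdivrMr // ltW // truncnS_gt.
suff walk k : (k <= N)%N -> `|h (k%:R * y / N%:R)| <= `|h 0| + k%:R * D.
  by have := walk N (leqnn N); rewrite mulrAC divff ?gt_eqF // mul1r.
elim: k => [_|k IH kN]; first by rewrite !mul0r addr0.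
set x1 := k.+1%:R * y / N%:R; set x0 := k%:R * y / N%:R.
have step : x1 - x0 = y / N%:R by rewrite -mulrBl -mulrBl -natrB // subSnn mul1r.
have x1K : `|x1| <= K.
  rewrite /x1 mulrAC normrM (le_trans _ hy) // ger0_norm ?divr_ge0 //.
  by rewrite ler_piMl // ler_pdivrMr // mul1r ler_nat.
have x10 : `|x1 - x0| <= gamma.
  rewrite step normrM [`|N%:R^-1|]gtr0_norm ?invr_gt0 //.
  by rewrite ler_pdivrMr // mulrC (le_trans hy).
rewrite -(subrK (h x0) (h x1)) (le_trans (ler_normD _ _)) //.
rewrite -natr1 mulrDl mul1r addrA addrC lerD ?hD //.
exact: IH (ltnW kN).
Qed.

Lemma norm_le_derive1_bounded (h : R -> R) (K l : R) :
  (forall x, derivable h x 1) ->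
  (forall c, `|c| <= K -> `|derive1 h c| <= l) ->
  forall y, `|y| <= K -> `|h y| <= `|h 0| + K * l.
Proof.
move=> hd hb y hy.
have dh (x : R) : is_derive x 1 h (derive1 h x) by rewrite derive1E; apply: derivableP.
have ch (a b : R) : {within `[a, b], continuous h}.
  apply: continuous_subspaceT => x.
  exact/differentiable_continuous/derivable1_diffP.
have bound_at (c : R) : `|c| <= `|y| -> `|derive1 h c * y| <= K * l.
  by move=> cy; rewrite normrM mulrC ler_pM ?hb // (le_trans cy).
rewrite -(subrK (h 0) (h y)) (le_trans (ler_normD _ _)) // addrC lerD2l.
have [y0|y0] := leP 0 y.
  have [c] := MVT_segment y0 (fun x _ => dh x) (ch 0 y).
  rewrite in_itv /= subr0 => /andP[c0 cy] ->; apply: bound_at.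
  by rewrite !ger0_norm // (le_trans c0).
have [c] := MVT_segment (ltW y0) (fun x _ => dh x) (ch y 0).
rewrite in_itv /= sub0r mulrN distrC => /andP[yc c0] ->; rewrite normrN.
by apply: bound_at; rewrite !ler0_norm ?lerN2 // ltW.
Qed.

End BoundsOnBalls.

Lemma logf_derive_bounded_on_ball (R : realType) (beta : R) (r : nat)
  (gamma lp : R) (L : {poly R}) (eps C alpha xi M : R) :
  r%:R < beta -> 0 < gamma -> 0 < lp ->
  forall i, (i <= r)%N -> forall K, 0 <= K -> exists l, 0 < l /\
    forall f : R -> R, inH beta r gamma lp L eps C alpha xi M f ->
    forall y : R, `|y| <= K -> `|derive1n (r - i) (logf f) y| <= l.
Proof.
move=> rb g0 lp0; elim => [_ K K0|i IH iS K K0].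
  have [B [B0 HB]] := horner_bounded_on_ball L K0.
  set D := (r`!)%:R * B * gamma `^ (beta - r%:R).
  exists (lp + (Num.truncn (K / gamma)).+1%:R * D); split.
    by rewrite ltr_wpDr // mulr_ge0 // mulr_ge0 ?powR_ge0 // mulr_ge0.
  move=> f [_ [_ [holder [at0 _]]]] y hy; rewrite subn0.
  rewrite (le_trans (bounded_on_ball_of_increments (D := D) g0 _ hy)) ?lerD2r ?at0 //.
  move=> x z xK xz; apply: le_trans (holder x z xz) _.
  apply: (@le_trans _ _ ((r`!)%:R * B * `|z - x| `^ (beta - r%:R))).
    by rewrite ler_wpM2r ?powR_ge0 // ler_wpM2l // (le_trans (ler_norm _)) ?HB.
  rewrite ler_wpM2l ?mulr_ge0 //.
  by apply: ge0_ler_powR; rewrite ?nnegrE ?subr_ge0 ?(ltW rb) ?(ltW g0) // distrC.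
have [l [l0 Hl]] := IH (ltnW iS) K K0.
exists (lp + K * l); split; first by rewrite ltr_wpDr // mulr_ge0 // ltW.
move=> f Hf y hy.
have ri : (r - i = (r - i.+1).+1)%N by lia.
have Hl' := Hl f Hf; rewrite ri in Hl'.
case: Hf => [_ [derivable_logf [_ [at0 _]]]].
rewrite (le_trans (norm_le_derive1_bounded _ Hl' hy)) ?lerD2r ?at0 ?leq_subr //.
by move=> x; apply: derivable_logf; lia.
Qed.

Theorem lemma11 (R : realType) (beta : R) (r : nat)
  (gamma lp : R) (L : {poly R}) (eps C alpha xi M : R) :
  0 < beta -> r%:R < beta -> beta <= r.+1%:R ->
  0 < gamma -> 0 < lp -> 0 < eps -> 0 < C -> 0 < alpha -> 0 < xi -> 0 < M ->
  forall (j : nat) (n : int), (j <= r)%N ->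
  exists l : R, 0 < l /\
    forall f : R -> R, inH beta r gamma lp L eps C alpha xi M f ->
    forall y : R, n%:~R * gamma <= y <= (n + 1)%:~R * gamma ->
    `|derive1n j (logf f) y| <= l.
Proof.
move=> _ rb _ g0 lp0 _ _ _ _ _ j n jr.
set m : R := n%:~R; set K := (`|m| + 1) * gamma.
have K0 : 0 <= K by rewrite mulr_ge0 ?addr_ge0 ?(ltW g0).
have [l [l0 Hl]] := @logf_derive_bounded_on_ball R beta r gamma lp L
  eps C alpha xi M rb g0 lp0 _ (leq_subr j r) K K0.
exists l; split => // f Hf y /andP[y1 y2].
rewrite -(subKn jr) Hl // ler_norml; apply/andP; split.
  apply: le_trans y1; rewrite -mulNr ler_wpM2r ?(ltW g0) //.
  by have := ler_norm (- m); rewrite normrN; lra.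
apply: le_trans y2 _; rewrite intrD -/m ler_wpM2r ?(ltW g0) //.
by have := ler_norm m; lra.
Qed.
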